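(* Let $\frac12\le M<\frac23$. Algorithm C (defined in the context) has migration factor at most $M$, and on every input whose optimal offline makespan is $1$ it produces a schedule of makespan at most $2-M$. Hence its competitive ratio is at most $2-M$.
   Context: Model (two hierarchical machines with migration, bin stretching). Jobs $1,2,\dots,n$ arrive one by one ($n$ unknown in advance). Job $j$ has a size $p_j>0$ and a grade of service (GoS) $g_j\in\{1,2\}$; a job of GoS $1$ may only be processed on machine $m_1$, a job of GoS $2$ may be processed on $m_1$ or on $m_2$. The load of a machine is the total size of its jobs, the makespan is the maximum load. When job $j$ arrives, the algorithm must assign it, and may migrate previously arrived jobs (respecting GoS) of total size at most $M\cdot p_j$ (migration factor $M$). Bin stretching: the optimal offline makespan of the complete input is known in advance and scaled to $1$. The competitive ratio is the supremum over inputs of (algorithm's makespan)/(optimal makespan). Notation: $Y_{j}$ is the set of jobs on $m_2$ just after job $j$ has been handled, $y_j$ its total size, $y_0=0$; $p^{\max Y}_j$ is the largest size of a job in $Y_{j-1}$ ($0$ if empty); ''sorted $Y_{j-1}$'' lists $Y_{j-1}$ in non-increasing order of size; $w_j$ is the total size of the chosen set $W$. Algorithm C (parameter $M$). On arrival of job $j$: Step 2: if $g_j=1$ or $y_{j-1}\ge M$, assign $j$ to $m_1$. Step 3: else if $y_{j-1}+p_j\le 2-M$, assign $j$ to $m_2$. Step 4: else if $p^{\max Y}_j>M\cdot p_j$, assign $j$ to $m_1$. Step 5: otherwise let $W$ be the shortest prefix of sorted $Y_{j-1}$ with total size at least $p_j+y_{j-1}-(2-M)$ (or $W=Y_{j-1}$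 if none exists); migrate the jobs of $W$ to $m_1$ and assign $j$ to $m_2$. *)

From HB Require Import structures.
From mathcomp Require Import all_boot all_order all_algebra.
Set Implicit Arguments. Unset Strict Implicit. Unset Printing Implicit Defensive.
Import Order.TTheory GRing.Theory Num.Theory.
Local Open Scope ring_scope.

Section AlgC.
Variable R : realFieldType.

(* An input is a sequence of jobs (p_j, g_j); jobs are indexed 0,...,n-1
   (job index i here is job i+1 of the paper). *)
Definition job := (R * nat)%type.

Definition psz (I : seq job) (i : nat) : R := (nth (0, 1%N) I i).1.
Definition gos (I : seq job) (i : nat) : nat := (nth (0, 1%N) I i).2.

Definition totsz (I : seq job) (Y : seq nat) : R := \sum_(i <- Y) psz I i.

Definition pmaxY (I : seq job) (Y : seq nat) : R :=
  foldr Num.max 0 [seq psz I i | i <- Y].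

Definition sortY (I : seq job) (Y : seq nat) : seq nat :=
  sort (fun i k => psz I k <= psz I i) Y.

(* shortest prefix of s with total size at least t, or s itself if none *)
Definition shortest_prefix (I : seq job) (s : seq nat) (t : R) : seq nat :=
  take (find (fun k => t <= totsz I (take k s)) (iota 0 (size s).+1)) s.

(* One step of Algorithm C: handles job j given Y = Y_{j-1} (jobs on m2);
   returns (Y_j, set of migrated jobs). *)
Definition stepC (M : R) (I : seq job) (j : nat) (Y : seq nat)
  : seq nat * seq nat :=
  let p := psz I j in
  let y := totsz I Y in
  if (gos I j == 1%N) || (M <= y) then (Y, [::])             (* Step 2 *)
  else if y + p <= 2 - M then (j :: Y, [::])                 (* Step 3 *)
  else if M * p < pmaxY I Y then (Y, [::])                   (* Step 4 *)
  else                                                       (* Step 5 *)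
    let W := shortest_prefix I (sortY I Y) (p + y - (2 - M)) in
    (j :: [seq i <- Y | i \notin W], W).

Fixpoint Ystate (M : R) (I : seq job) (j : nat) : seq nat :=
  match j with
  | O => [::]
  | j'.+1 => (stepC M I j' (Ystate M I j')).1
  end.

Definition migrated (M : R) (I : seq job) (j : nat) : seq nat :=
  (stepC M I j (Ystate M I j)).2.

Definition loads_C (M : R) (I : seq job) : R * R :=
  let Y := Ystate M I (size I) in
  (totsz I [seq i <- iota 0 (size I) | i \notin Y], totsz I Y).

Definition makespan_C (M : R) (I : seq job) : R :=
  Num.max (loads_C M I).1 (loads_C M I).2.

(* Offline schedules: a i = true iff job i is on m2; GoS must be respected. *)
Definition valid_sched (I : seq job) (a : nat -> bool) : Prop :=
  forall i, (i < size I)%N -> gos I i = 1%N -> a i = false.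

Definition sched_makespan (I : seq job) (a : nat -> bool) : R :=
  Num.max (totsz I [seq i <- iota 0 (size I) | ~~ a i])
          (totsz I [seq i <- iota 0 (size I) | a i]).

Definition opt_makespan_is (I : seq job) (v : R) : Prop :=
  (exists a, valid_sched I a /\ sched_makespan I a = v) /\
  (forall a, valid_sched I a -> v <= sched_makespan I a).

Definition valid_input (I : seq job) : Prop :=
  all (fun jb => (0 < jb.1) && ((jb.2 == 1%N) || (jb.2 == 2%N))) I.

End AlgC.

From HB Require Import structures.
From mathcomp Require Import all_boot all_order all_algebra.
From mathcomp Require Import lra.
Import Order.TTheory GRing.Theory Num.Theory.
Local Open Scope ring_scope.
Set Implicit Arguments. Unset Strict Implicit.

(* Migration: Step 5 moves the shortest prefix W of the m2-jobs sorted by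
   decreasing size whose weight reaches the excess t = p_j + y - (2 - M).
   Either W is a single job, of size at most pmaxY <= M p_j, or its last job is
   no larger than the rest of W, which weighs less than t; then w < 2 t, and
   w <= y < M, and one of the two gives w <= M p_j because M <= 2/3.

   Makespan: Steps 3 and 5 keep the load of m2 at most 2 - M.  If m2 ends with
   load at least M, m1 carries at most 2 - M since the total load is at most 2.
   Otherwise no migration ever happened (a migrating job alone is larger than
   2 - 2M > M), so m2 only grew, and every job that the optimum puts on m2 but C
   leaves on m1 was rejected in Step 4: it is larger than 2 - 2M and some job on
   m2 is larger than M times it.  Hence there is at most one such job i, its
   partner k lies on m1 in the optimum, and m1 carries at most
   1 - p_k + p_i <= 1 + (1 - M) p_i <= 2 - M. *)

Section NonnegSums.
Variables (R : realFieldType) (T : eqType) (F : T -> R).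
Hypothesis F_ge0 : forall i, 0 <= F i.

Lemma ler_sum_pred r (P Q : pred T) :
  {in r, forall i, P i -> Q i} ->
  \sum_(i <- r | P i) F i <= \sum_(i <- r | Q i) F i.
Proof.
move=> PQ; rewrite (big_mkcond P) (big_mkcond Q) big_seq [leRHS]big_seq.
apply: ler_sum => i /PQ; case: (P i) => [-> //|_]; by case: (Q i).
Qed.

Lemma big_predU_disj r (P Q : pred T) :
  (forall i, P i -> ~~ Q i) ->
  \sum_(i <- r | P i || Q i) F i = \sum_(i <- r | P i) F i + \sum_(i <- r | Q i) F i.
Proof.
move=> PnQ; rewrite (big_mkcond P) (big_mkcond Q) (big_mkcond (predU P Q)) -big_split.
apply: eq_bigr => i _ /=; case Pi: (P i); last by rewrite add0r.
by rewrite (negbTE (PnQ _ Pi)) addr0.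
Qed.

Lemma big_pred1_seq r j : uniq r -> j \in r -> \sum_(i <- r | i == j) F i = F j.
Proof. by move=> Ur rj; rewrite -big_filter filter_pred1_uniq // big_seq1. Qed.

Lemma ler_sum_pred1 r (P : pred T) j : uniq r -> j \in r -> P j ->
  F j <= \sum_(i <- r | P i) F i.
Proof.
move=> Ur rj Pj; rewrite -(big_pred1_seq Ur rj).
by apply: ler_sum_pred => i _ /eqP->.
Qed.

Lemma ler_sum_pred2 r (P : pred T) j k : uniq r -> j \in r -> k \in r -> j != k ->
  P j -> P k -> F j + F k <= \sum_(i <- r | P i) F i.
Proof.
move=> Ur rj rk njk Pj Pk; rewrite -(big_pred1_seq Ur rj) -(big_pred1_seq Ur rk).
rewrite -big_predU_disj => [|i /eqP->//].
by apply: ler_sum_pred => i _ /orP[]/eqP->.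
Qed.

End NonnegSums.

Section Prefixes.
Variables (R : realFieldType) (I : seq (job R)).
Hypothesis psz_ge0 : forall i, 0 <= psz I i.

Lemma totsz_ge0 Y : 0 <= totsz I Y.
Proof. exact: sumr_ge0. Qed.

Lemma totsz_cat Y Z : totsz I (Y ++ Z) = totsz I Y + totsz I Z.
Proof. exact: big_cat. Qed.

Lemma totsz_rcons Y a : totsz I (rcons Y a) = totsz I Y + psz I a.
Proof. by rewrite -cats1 totsz_cat /totsz big_seq1. Qed.

Lemma totsz_prefix W s : prefix W s -> totsz I W <= totsz I s.
Proof. by case/prefixP=> s' ->; rewrite totsz_cat lerDl totsz_ge0. Qed.

Lemma totsz_prefix_in W s : prefix W s -> totsz I W <= \sum_(i <- s | i \in W) psz I i.
Proof.
case/prefixP=> s' ->; rewrite big_cat /= -big_seq lerDl.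
exact: sumr_ge0.
Qed.

Lemma perm_sortY Y : perm_eq (sortY I Y) Y.
Proof. by rewrite /sortY perm_sort. Qed.

Lemma totsz_perm Y Z : perm_eq Y Z -> totsz I Y = totsz I Z.
Proof. exact: perm_big. Qed.

Lemma sortY_nth_le_take Y k : (0 < k < size (sortY I Y))%N ->
  psz I (nth 0%N (sortY I Y) k) <= totsz I (take k (sortY I Y)).
Proof.
case/andP=> k_gt0 k_lt; set s := sortY I Y.
have s_sorted : sorted (fun i j => psz I j <= psz I i) s.
  by apply: sort_sorted => i j; exact: le_total.
have s_gt0 : (0 < size s)%N by exact: ltn_trans k_lt.
have le_head : psz I (nth 0%N s k) <= psz I (nth 0%N s 0).
  have le_tr : transitive (fun i j => psz I j <= psz I i).
    by move=> j i l le_ji le_lj; exact: le_trans le_lj le_ji.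
  exact: (sorted_ltn_nth le_tr 0%N s_sorted).
apply: (le_trans le_head).
have -> : psz I (nth 0%N s 0) = totsz I (take 1 (take k s)).
  by rewrite take_takel // (take_nth 0%N s_gt0) take0 totsz_rcons /totsz big_nil add0r.
by apply: totsz_prefix; exact: prefix_take.
Qed.

Variant shortest_prefix_spec (s : seq nat) (t : R) : seq nat -> Prop :=
| ShortestPrefixAll of totsz I s < t : shortest_prefix_spec s t s
| ShortestPrefixNil of t <= 0 : shortest_prefix_spec s t [::]
| ShortestPrefixLast k of (k < size s)%N & totsz I (take k s) < t
    & t <= totsz I (take k.+1 s) : shortest_prefix_spec s t (take k.+1 s).

Lemma shortest_prefixP s t : shortest_prefix_spec s t (shortest_prefix I s t).
Proof.
rewrite /shortest_prefix; set P := (fun k => _); set r := iota 0 _.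
have nth_r k : (k < size r)%N -> nth 0%N r k = k.
  by rewrite size_iota => ?; rewrite nth_iota.
have [has_r|] := boolP (has P r); last first.
  move=> hasN; rewrite hasNfind // size_iota take_oversize //.
  apply: ShortestPrefixAll; move/hasPn: hasN => /(_ (size s)).
  by rewrite mem_iota ltnS leqnn /P take_size ltNge => /(_ isT).
have find_lt : (find P r < size r)%N by rewrite -has_find.
have := nth_find 0%N has_r; rewrite nth_r // /P.
have before k : (k < find P r)%N -> ~~ P k.
  by move=> lt_k; rewrite -(nth_r k) ?(ltn_trans lt_k) // before_find.
case Ek: (find P r) find_lt before => [|k] find_lt before Pk.
  by rewrite take0; apply: ShortestPrefixNil; rewrite take0 /totsz big_nil in Pk.
apply: ShortestPrefixLast => //; first by move: find_lt; rewrite size_iota.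
by rewrite ltNge; exact: before.
Qed.

End Prefixes.

Lemma psz_le_pmaxY (R : realFieldType) (I : seq (job R)) Y i :
  i \in Y -> psz I i <= pmaxY I Y.
Proof.
rewrite /pmaxY; elim: Y => [|a Y IH] //=; rewrite in_cons => /orP[/eqP->|/IH].
  by rewrite le_max lexx.
by rewrite le_max => ->; rewrite orbT.
Qed.

Lemma pmaxY_gtP (R : realFieldType) (I : seq (job R)) Y (c : R) :
  0 <= c -> c < pmaxY I Y -> exists2 k, k \in Y & c < psz I k.
Proof.
rewrite /pmaxY => c_ge0; elim: Y => [|a Y IH] /=; first by rewrite ltNge c_ge0.
rewrite lt_max => /orP[lt_ca|/IH[k Yk lt_ck]]; first by exists a; rewrite ?mem_head.
by exists k; rewrite // in_cons Yk orbT.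
Qed.

Lemma migration_arith (R : realFieldType) (M p y w a : R) :
  0 <= M -> M <= 2 / 3 -> 0 <= p -> y < M ->
  w < p + y - (2 - M) -> a <= w -> w + a <= y -> w + a <= M * p.
Proof.
move=> M_ge0 M_le p_ge0 y_lt w_lt a_le wa_le.
have [p_ge1|p_lt1] := lerP 1 p.
  have : 0 <= M * (p - 1) by apply: mulr_ge0; lra.
  lra.
have : 0 < (2 - M) * (1 - p) by apply: mulr_gt0; lra.
lra.
Qed.

Section Step.
Variables (R : realFieldType) (M : R) (I : seq (job R)).
Hypotheses (M_ge : 1 / 2 <= M) (M_lt : M < 2 / 3).
Hypothesis psz_ge0 : forall i, 0 <= psz I i.
(* [lra] does not see section hypotheses: proofs below copy the ones they need into the context. *)

Definition migration_set (Y : seq nat) (j : nat) : seq nat :=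
  shortest_prefix I (sortY I Y) (psz I j + totsz I Y - (2 - M)).

Lemma totsz_migration_set Y j :
  totsz I Y < M -> 2 - M < totsz I Y + psz I j -> pmaxY I Y <= M * psz I j ->
  totsz I (migration_set Y j) <= M * psz I j.
Proof.
move=> y_lt y_gt pmax_le; have M_ge' := M_ge; have M_lt' := M_lt.
have p_ge0 := psz_ge0 j; have y_ge0 := totsz_ge0 psz_ge0 Y.
have totsz_sortY := totsz_perm I (perm_sortY I Y).
rewrite /migration_set; case: shortest_prefixP => [s_lt|_|k k_lt w_lt _].
- rewrite totsz_sortY in s_lt *.
  have : 0 <= M * (psz I j - 1) by apply: mulr_ge0; lra.
  lra.
- by rewrite /totsz big_nil; apply: mulr_ge0; lra.
case: k k_lt w_lt => [|k] k_lt w_lt; rewrite (take_nth 0%N k_lt) totsz_rcons.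
  rewrite take0 /totsz big_nil add0r; apply: le_trans pmax_le; apply: psz_le_pmaxY.
  by rewrite -(perm_mem (perm_sortY I Y)) mem_nth.
apply: migration_arith w_lt _ _ => //; [lra | lra | exact: sortY_nth_le_take | ].
rewrite -totsz_rcons -(take_nth 0%N k_lt) -totsz_sortY.
exact/totsz_prefix/prefix_take.
Qed.

Lemma sum_notin_migration_set Y j :
  \sum_(i <- Y | i \notin migration_set Y j) psz I i <= Num.max 0 (2 - M - psz I j).
Proof.
have split_Y : totsz I Y = \sum_(i <- Y | i \in migration_set Y j) psz I i
                         + \sum_(i <- Y | i \notin migration_set Y j) psz I i.
  by rewrite /totsz (bigID (fun i => i \in migration_set Y j)).
have W_in : totsz I (migration_set Y j) <= \sum_(i <- Y | i \in migration_set Y j) psz I i.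
  by rewrite -(perm_big _ (perm_sortY I Y)) totsz_prefix_in // prefix_take.
have in_ge0 : 0 <= \sum_(i <- Y | i \in migration_set Y j) psz I i by exact: sumr_ge0.
move: split_Y W_in in_ge0; rewrite le_max /migration_set.
case: shortest_prefixP => [s_lt|t_le0|k _ _ t_le] split_Y W_in in_ge0.
- by rewrite (totsz_perm I (perm_sortY I Y)) in W_in; apply/orP; left; lra.
- by apply/orP; right; lra.
- by apply/orP; right; lra.
Qed.

Variant stepC_spec (j : nat) (Y : seq nat) : seq nat * seq nat -> Prop :=
| StepC_m1 of (gos I j == 1%N) || (M <= totsz I Y) : stepC_spec j Y (Y, [::])
| StepC_m2 of totsz I Y + psz I j <= 2 - M : stepC_spec j Y (j :: Y, [::])
| StepC_reject of 2 - M < totsz I Y + psz I j & M * psz I j < pmaxY I Y :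
    stepC_spec j Y (Y, [::])
| StepC_migrate of totsz I Y < M & 2 - M < totsz I Y + psz I j
    & pmaxY I Y <= M * psz I j :
    stepC_spec j Y (j :: [seq i <- Y | i \notin migration_set Y j], migration_set Y j).

Lemma stepCP j Y : stepC_spec j Y (stepC M I j Y).
Proof.
rewrite /stepC; case: ifP => [|/negbT]; first exact: StepC_m1.
rewrite negb_or -ltNge => /andP[_ y_lt].
case: ifP => [|/negbT]; first exact: StepC_m2.
rewrite -ltNge => y_gt; case: ifPn; first exact: StepC_reject.
by rewrite -leNgt; exact: StepC_migrate.
Qed.

Lemma stepC_migration j Y : totsz I (stepC M I j Y).2 <= M * psz I j.
Proof.
have M_ge' := M_ge; have Mp_ge0 : 0 <= M * psz I j by apply: mulr_ge0 (psz_ge0 j); lra.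
by case: stepCP => //= *; [rewrite /totsz big_nil.. | exact: totsz_migration_set].
Qed.

Lemma totsz_cons j Y : totsz I (j :: Y) = psz I j + totsz I Y.
Proof. exact: big_cons. Qed.

Lemma totsz_migrate j Y :
  totsz I (j :: [seq i <- Y | i \notin migration_set Y j])
  = psz I j + \sum_(i <- Y | i \notin migration_set Y j) psz I i.
Proof. by rewrite totsz_cons /totsz big_filter. Qed.

(* The migrating job alone exceeds 2 - 2M > M. *)
Lemma migrate_load_gt j Y : totsz I Y < M -> 2 - M < totsz I Y + psz I j ->
  M < totsz I (j :: [seq i <- Y | i \notin migration_set Y j]).
Proof.
move=> y_lt y_gt; have M_lt' := M_lt; rewrite totsz_migrate.
have : 0 <= \sum_(i <- Y | i \notin migration_set Y j) psz I i by exact: sumr_ge0.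
lra.
Qed.

Lemma stepC_wf j Y : uniq Y -> {in Y, forall i, (i < j)%N} ->
  uniq (stepC M I j Y).1 /\ {in (stepC M I j Y).1, forall i, (i < j.+1)%N}.
Proof.
move=> Y_uniq Y_lt; have jNY : j \notin Y by apply/negP => /Y_lt; rewrite ltnn.
have Y_le i : i \in Y -> (i < j.+1)%N by move/Y_lt/ltnW.
case: stepCP => /= *; split => //; rewrite ?filter_uniq ?mem_filter ?negb_and ?jNY ?orbT //.
- by move=> i; rewrite in_cons => /predU1P[->|/Y_le].
- by move=> i; rewrite in_cons mem_filter => /predU1P[->|/andP[_ /Y_le]].
Qed.

Lemma stepC_load_le j Y : psz I j <= 1 -> totsz I Y <= 2 - M ->
  totsz I (stepC M I j Y).1 <= 2 - M.
Proof.
move=> p_le1 y_le; have M_lt' := M_lt.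
case: stepCP => //= [y_le'|_ _ _]; first by rewrite totsz_cons addrC.
have := sum_notin_migration_set Y j; rewrite totsz_migrate le_max => /orP[] ? ; lra.
Qed.

Lemma stepC_grow j Y : totsz I (stepC M I j Y).1 < M ->
  totsz I Y <= totsz I (stepC M I j Y).1 /\ {subset Y <= (stepC M I j Y).1}.
Proof.
case: stepCP => /= [_ _|_ _|_ _ _|y_lt y_gt]; try by split.
- by split; [rewrite totsz_cons ler_wpDl | move=> i Yi; rewrite in_cons Yi orbT].
- by move=> _ /(lt_trans (migrate_load_gt y_lt y_gt)); rewrite ltxx.
Qed.

Lemma stepC_rejected j Y : gos I j != 1%N -> totsz I (stepC M I j Y).1 < M ->
  j \notin (stepC M I j Y).1 ->
  2 - M < totsz I Y + psz I j /\ exists2 k, k \in Y & M * psz I j < psz I k.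
Proof.
move=> gos_j; case: stepCP => /= [|_|y_gt pmax_gt|y_lt y_gt _].
- by rewrite (negbTE gos_j) /= => M_le /(le_lt_trans M_le); rewrite ltxx.
- by rewrite mem_head.
- split => //; apply: pmaxY_gtP pmax_gt; apply: mulr_ge0 (psz_ge0 j).
  by apply: le_trans M_ge; rewrite divr_ge0.
- by move/(lt_trans (migrate_load_gt y_lt y_gt)); rewrite ltxx.
Qed.

Lemma Ystate_wf m : uniq (Ystate M I m) /\ {in Ystate M I m, forall i, (i < m)%N}.
Proof. by elim: m => [|m [Y_uniq Y_lt]] //=; exact: stepC_wf. Qed.

Lemma Ystate_load_le m : (forall j, psz I j <= 1) -> totsz I (Ystate M I m) <= 2 - M.
Proof.
move=> p_le1; have M_lt' := M_lt.
elim: m => [|m IH] /=; last exact: stepC_load_le.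
by rewrite /totsz big_nil; lra.
Qed.

Lemma Ystate_grow i m : (i <= m)%N -> totsz I (Ystate M I m) < M ->
  totsz I (Ystate M I i) <= totsz I (Ystate M I m) /\ {subset Ystate M I i <= Ystate M I m}.
Proof.
elim: m => [|m IH]; first by rewrite leqn0 => /eqP->.
rewrite leq_eqVlt => /predU1P[-> _|i_le /= Ym_lt]; first by split.
have [Ym_ge Ym_sub] := stepC_grow Ym_lt.
have [Yi_le Yi_sub] := IH i_le (le_lt_trans Ym_ge Ym_lt).
by split=> [|k /Yi_sub /Ym_sub //]; exact: le_trans Ym_ge.
Qed.

Lemma Ystate_rejected n i : (i < n)%N -> gos I i != 1%N ->
  i \notin Ystate M I n -> totsz I (Ystate M I n) < M ->
  2 - 2 * M < psz I i /\ exists2 k, k \in Ystate M I n & M * psz I i < psz I k.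
Proof.
move=> i_lt gos_i iNY Yn_lt; have [Yi_le Yi_sub] := Ystate_grow (ltnW i_lt) Yn_lt.
have [Yi1_le Yi1_sub] := Ystate_grow i_lt Yn_lt.
have [||y_gt [k Yk p_lt]] := @stepC_rejected i (Ystate M I i) gos_i.
- exact: le_lt_trans Yi1_le Yn_lt.
- by apply: contra iNY; exact: Yi1_sub.
split; last by exists k => //; exact: Yi_sub.
by have := le_lt_trans Yi_le Yn_lt; lra.
Qed.

End Step.

Definition load_on (R : realFieldType) (I : seq (job R)) (P : pred nat) : R :=
  \sum_(i <- iota 0 (size I) | P i) psz I i.

Lemma totsz_filter_iota (R : realFieldType) (I : seq (job R)) (P : pred nat) :
  totsz I [seq i <- iota 0 (size I) | P i] = load_on I P.
Proof. exact: big_filter. Qed.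

Lemma totsz_load_on (R : realFieldType) (I : seq (job R)) Y :
  uniq Y -> {in Y, forall i, (i < size I)%N} -> totsz I Y = load_on I (mem Y).
Proof.
move=> Y_uniq Y_lt; rewrite -totsz_filter_iota; apply: perm_big.
apply: uniq_perm; rewrite ?filter_uniq ?iota_uniq // => i.
by rewrite mem_filter mem_iota add0n leq0n /= andb_idr //; exact: Y_lt.
Qed.

Lemma valid_input_psz_ge0 (R : realFieldType) (I : seq (job R)) :
  valid_input I -> forall i, 0 <= psz I i.
Proof.
move=> I_valid i; case: (ltnP i (size I)) => [i_lt|i_ge]; last by rewrite /psz nth_default.
by have /andP[/ltW ? _] := allP I_valid _ (mem_nth (0, 1%N) i_lt).
Qed.

Lemma opt_makespan_is_1 (R : realFieldType) (I : seq (job R)) :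
  opt_makespan_is I 1 -> exists2 a, valid_sched I a &
    load_on I (fun i => ~~ a i) <= 1 /\ load_on I a <= 1.
Proof.
case=> [[a [a_valid a_opt]] _]; exists a => //.
by move: a_opt; rewrite /sched_makespan !totsz_filter_iota => <-; split; rewrite le_max lexx ?orbT.
Qed.

Section MachineOneLoad.
Variables (R : realFieldType) (M : R) (I : seq (job R)) (a : nat -> bool).
Hypotheses (M_ge : 1 / 2 <= M) (M_lt : M < 2 / 3).
Hypothesis psz_ge0 : forall i, 0 <= psz I i.
Hypothesis a_valid : valid_sched I a.
Hypotheses (opt_m1 : load_on I (fun i => ~~ a i) <= 1) (opt_m2 : load_on I a <= 1).

Local Notation Y := (Ystate M I (size I)).

Definition misplaced (i : nat) : bool := [&& (i < size I)%N, i \notin Y & a i].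

Lemma psz_le1 j : psz I j <= 1.
Proof.
case: (ltnP j (size I)) => [j_lt|j_ge]; last by rewrite /psz nth_default.
have j_in : j \in iota 0 (size I) by rewrite mem_iota.
case aj: (a j).
  by apply: le_trans opt_m2; apply: (ler_sum_pred1 psz_ge0); rewrite ?iota_uniq.
by apply: le_trans opt_m1; apply: (ler_sum_pred1 psz_ge0); rewrite ?iota_uniq ?aj.
Qed.

Lemma misplaced_partner i : misplaced i -> totsz I Y < M ->
  2 - 2 * M < psz I i /\ exists2 k, k \in Y & ~~ a k /\ M * psz I i < psz I k.
Proof.
case/and3P=> i_lt iNY ai y_lt; have M_ge' := M_ge; have M_lt' := M_lt.
have gos_i : gos I i != 1%N by apply: contraTneq ai => /(a_valid i_lt) ->.
have [p_gt [k Yk p_lt]] := Ystate_rejected M_ge M_lt psz_ge0 i_lt gos_i iNY y_lt.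
split=> //; exists k => //; split=> //; apply/negP => ak.
have k_lt : (k < size I)%N by have [_] := Ystate_wf M I (size I); apply.
have ik : i != k by apply: contraNneq iNY => ->.
have : psz I i + psz I k <= load_on I a.
  by apply: (ler_sum_pred2 psz_ge0); rewrite ?iota_uniq ?mem_iota.
(* p_i + p_k > (1 + M)(2 - 2M) > 1 since M^2 < 1/2. *)
have := opt_m2; have : 0 < M * (psz I i - (2 - 2 * M)) by apply: mulr_gt0; lra.
have : M * M < 4 / 9 by nra.
lra.
Qed.

Lemma misplaced_unique i i' : misplaced i -> misplaced i' -> totsz I Y < M -> i = i'.
Proof.
move=> mi mi' y_lt; have [p_gt _] := misplaced_partner mi y_lt.
have [p'_gt _] := misplaced_partner mi' y_lt; apply/eqP/negPn/negP => ii'.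
move: mi mi' => /and3P[i_lt _ ai] /and3P[i'_lt _ ai']; have M_lt' := M_lt.
have : psz I i + psz I i' <= load_on I a.
  by apply: (ler_sum_pred2 psz_ge0); rewrite ?iota_uniq ?mem_iota.
have := opt_m2; lra.
Qed.

Lemma m1_load_le_of_lt : totsz I Y < M -> load_on I (fun i => i \notin Y) <= 2 - M.
Proof.
move=> y_lt; have M_ge' := M_ge; have M_lt' := M_lt; have opt_m1' := opt_m1.
have r_uniq := iota_uniq 0 (size I).
have [/hasP[i i_in mi]|/hasPn no_mis] := boolP (has misplaced (iota 0 (size I))); last first.
  suff : load_on I (fun i => i \notin Y) <= load_on I (fun i => ~~ a i) by lra.
  apply: (ler_sum_pred psz_ge0) => j j_in jNY; apply: contraT => /negbNE aj.
  have := no_mis j j_in; rewrite /misplaced jNY aj /= andbT.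
  by move: j_in; rewrite mem_iota add0n => /= ->.
have [p_gt [k Yk [ak p_lt]]] := misplaced_partner mi y_lt.
have k_in : k \in iota 0 (size I).
  by rewrite mem_iota add0n; have [_] := Ystate_wf M I (size I); apply.
rewrite {1}/load_on (bigID a) /=.
have A_le : \sum_(j <- iota 0 (size I) | (j \notin Y) && a j) psz I j <= psz I i.
  rewrite -(big_pred1_seq _ r_uniq i_in); apply: (ler_sum_pred psz_ge0) => j j_in /andP[jNY aj].
  apply/eqP; apply: misplaced_unique => //.
  by rewrite /misplaced jNY aj !andbT; move: j_in; rewrite mem_iota add0n.
have B_le : \sum_(j <- iota 0 (size I) | (j \notin Y) && ~~ a j) psz I j + psz I k
            <= load_on I (fun i => ~~ a i).
  rewrite -(big_pred1_seq _ r_uniq k_in) -big_predU_disj.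
    by apply: (ler_sum_pred psz_ge0) => j _ /orP[/andP[_ //]|/eqP->].
  by move=> j /andP[jNY _]; apply: contraNneq jNY => ->.
have p_le1 := psz_le1 i.
have : 0 <= (1 - M) * (1 - psz I i) by apply: mulr_ge0; lra.
lra.
Qed.

Lemma m1_load_le : load_on I (fun i => i \notin Y) <= 2 - M.
Proof.
have [M_le|] := lerP M (totsz I Y); last exact: m1_load_le_of_lt.
have [Y_uniq Y_lt] := Ystate_wf M I (size I).
have splitY : \sum_(i <- iota 0 (size I)) psz I i
              = totsz I Y + load_on I (fun i => i \notin Y).
  by rewrite totsz_load_on // /load_on (bigID (mem Y)).
have splitA : \sum_(i <- iota 0 (size I)) psz I i
              = load_on I (fun i => ~~ a i) + load_on I a.
  by rewrite /load_on (bigID a) addrC.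
have opt_m1' := opt_m1; have opt_m2' := opt_m2; lra.
Qed.

Lemma makespan_C_le : makespan_C M I <= 2 - M.
Proof.
rewrite /makespan_C /loads_C /= ge_max totsz_filter_iota m1_load_le /=.
by apply: Ystate_load_le => //; exact: psz_le1.
Qed.

End MachineOneLoad.

Theorem mainTheorem10 (R : realFieldType) (M : R) :
  1 / 2 <= M -> M < 2 / 3 ->
  (forall (I : seq (job R)), valid_input I ->
     forall j, (j < size I)%N -> totsz I (migrated M I j) <= M * psz I j) /\
  (forall (I : seq (job R)), valid_input I -> opt_makespan_is I 1 ->
     makespan_C M I <= 2 - M).
Proof.
move=> M_ge M_lt; split=> [I I_valid j _|I I_valid].
  by apply: stepC_migration => //; exact: valid_input_psz_ge0.
case/opt_makespan_is_1=> a a_valid [opt_m1 opt_m2].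
by apply: makespan_C_le opt_m1 opt_m2 => //; exact: valid_input_psz_ge0.
Qed.
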